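(* Let $G$ be an infinite discrete group and let $X$ be a minimal $G$-flow. The following are equivalent: (i) For every finite $D\subseteq G$ there is a $D$-separated $S\subseteq G$ such that for every $x\in X$, the set $S\cdot x$ is dense in $X$. (ii) $X$ has the separated covering property. (iii) $X$ is disjoint from the Bernoulli flow $2^G$.
   Context: A $G$-flow is a compact Hausdorff space with an action of $G$ by homeomorphisms; it is minimal if every orbit is dense. For finite $D\subseteq G$, a set $S\subseteq G$ is $D$-separated if $Dg\cap Dh=\emptyset$ for all distinct $g,h\in S$. A minimal $G$-flow $X$ has the separated covering property (SCP) if for every finite $D\subseteq G$ and every non-empty open $U\subseteq X$ there exists a $D$-separated $S\subseteq G$ with $S^{-1}U=X$. The Bernoulli flow is $2^G$ with the action $(g\cdot z)(h)=z(hg)$. Two $G$-flows $X,Y$ are disjoint if the only closed $G$-invariant subset of $X\times Y$ projecting onto both factors is $X\times Y$. *)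

From Stdlib Require Import List Classical.
Import ListNotations.
Set Implicit Arguments.

Record group := Group {
  gcar :> Type;
  gmul : gcar -> gcar -> gcar;
  ginv : gcar -> gcar;
  gone : gcar;
  gmulA : forall a b c, gmul a (gmul b c) = gmul (gmul a b) c;
  gmul1l : forall a, gmul gone a = a;
  gmul1r : forall a, gmul a gone = a;
  gmulVl : forall a, gmul (ginv a) a = gone;
  gmulVr : forall a, gmul a (ginv a) = gone
}.
Arguments gmul {_} _ _.
Arguments ginv {_} _.
Arguments gone {_}.

Definition infinite_group (G : group) : Prop :=
  forall l : list G, exists g : G, ~ In g l.

Definition topology (X : Type) := (X -> Prop) -> Prop.

Definition is_topology {X : Type} (op : topology X) : Prop :=
  op (fun _ => True) /\
  (forall U V, op U -> op V -> op (fun x => U x /\ V x)) /\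
  (forall F : (X -> Prop) -> Prop, (forall U, F U -> op U) ->
      op (fun x => exists U, F U /\ U x)).

Definition compact {X : Type} (op : topology X) : Prop :=
  forall F : (X -> Prop) -> Prop,
    (forall U, F U -> op U) -> (forall x, exists U, F U /\ U x) ->
    exists l : list (X -> Prop),
      (forall U, In U l -> F U) /\ (forall x, exists U, In U l /\ U x).

Definition hausdorff {X : Type} (op : topology X) : Prop :=
  forall x y, x <> y -> exists U V, op U /\ op V /\ U x /\ V y /\
    (forall z, ~ (U z /\ V z)).

Definition continuous {X Y : Type} (opX : topology X) (opY : topology Y)
  (f : X -> Y) : Prop :=
  forall V, opY V -> opX (fun x => V (f x)).

Definition closed {X : Type} (op : topology X) (C : X -> Prop) : Prop :=
  op (fun x => ~ C x).

Definition dense {X : Type} (op : topology X) (A : X -> Prop) : Prop :=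
  forall U, op U -> (exists y, U y) -> exists y, U y /\ A y.

Definition is_action {G : group} {X : Type} (act : G -> X -> X) : Prop :=
  (forall x, act gone x = x) /\
  (forall g h x, act (gmul g h) x = act g (act h x)).

(** A G-flow: compact Hausdorff space with an action by homeomorphisms
    (each act g is continuous, with continuous inverse act (ginv g)). *)
Definition is_flow {G : group} {X : Type} (op : topology X)
  (act : G -> X -> X) : Prop :=
  is_topology op /\ compact op /\ hausdorff op /\ is_action act /\
  (forall g, continuous op op (act g)).

Definition orbit_of {G : group} {X : Type} (act : G -> X -> X)
  (S : G -> Prop) (x : X) : X -> Prop :=
  fun y => exists s, S s /\ y = act s x.

Definition minimal {G : group} {X : Type} (op : topology X)
  (act : G -> X -> X) : Prop :=
  forall x, dense op (orbit_of act (fun _ => True) x).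

(** S is D-separated: D g and D h are disjoint for distinct g, h in S.
    Finite subsets D of G are given as lists. *)
Definition separated {G : group} (D : list G) (S : G -> Prop) : Prop :=
  forall g h, S g -> S h -> g <> h ->
    forall d1 d2, In d1 D -> In d2 D -> gmul d1 g <> gmul d2 h.

(** Separated covering property: S^{-1} U = X, i.e. every x has some
    s in S with s . x in U. *)
Definition SCP {G : group} {X : Type} (op : topology X)
  (act : G -> X -> X) : Prop :=
  forall (D : list G) (U : X -> Prop), op U -> (exists x, U x) ->
    exists S : G -> Prop, separated D S /\
      (forall x, exists s, S s /\ U (act s x)).

Definition prod_top {X Y : Type} (opX : topology X) (opY : topology Y)
  : topology (X * Y) :=
  fun W => forall p, W p -> exists U V, opX U /\ opY V /\ U (fst p) /\
    V (snd p) /\ (forall q, U (fst q) -> V (snd q) -> W q).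

Definition disjoint_flows {G : group} {X Y : Type}
  (opX : topology X) (actX : G -> X -> X)
  (opY : topology Y) (actY : G -> Y -> Y) : Prop :=
  forall C : X * Y -> Prop,
    closed (prod_top opX opY) C ->
    (forall g p, C p -> C (actX g (fst p), actY g (snd p))) ->
    (forall x, exists y, C (x, y)) ->
    (forall y, exists x, C (x, y)) ->
    forall p, C p.

Definition bern_top (G : group) : topology (G -> bool) :=
  fun U => forall z, U z -> exists F : list G,
    forall z', (forall h, In h F -> z' h = z h) -> U z'.

Definition bern_act {G : group} (g : G) (z : G -> bool) : G -> bool :=
  fun h => z (gmul h g).

(* For (ii) => (i), compactness turns every separated
   covering into a finite one, so it suffices to find one D-separated set S
   containing a right translate of every finite D-separated set. Such an S is
   built by transfinite recursion along a well-order of the finite subsets of G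
   all of whose initial segments are smaller than G: at each stage only finitely
   many translates are forbidden by each earlier set, and these do not exhaust
   G. This counting uses |G^<omega| = |G| for infinite G, i.e. Hessenberg's
   theorem k * k = k, proved with Zorn's lemma on partial injections.

   (ii) => (iii): if a closed invariant C with full projections missed a box
   U x [pattern on F], plant that pattern along an F-separated S with
   S^-1 U = X; some (x, z) in C is then pushed into the box by an s in S.
   (iii) => (ii): if SCP fails for D and U, the pairs (x, w) for which no
   D-isolated 1 of w moves x into U form a closed invariant set with full
   projections, which nevertheless misses (u, indicator of the identity)
   for any u in U. *)

From Stdlib Require Import List Classical ClassicalEpsilon FinFun Bool Cantor.
From mathcomp Require eqtype boolp classical_sets wochoice.
Import ListNotations.

Definition card_le (A B : Type) : Prop := exists f : A -> B, Injective f.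

Lemma card_le_trans {A B C : Type} : card_le A B -> card_le B C -> card_le A C.
Proof.
  intros [f Hf] [g Hg]. exists (fun x => g (f x)). intros x y E. apply Hf, Hg, E.
Qed.

Lemma proj1_sig_inj {A : Type} {P : A -> Prop} : Injective (@proj1_sig A P).
Proof. intros x y. apply eq_sig_hprop. intros. apply proof_irrelevance. Qed.

Lemma card_le_subtype {A : Type} {P Q : A -> Prop} :
  inhabited A -> card_le {x | P x} {x | Q x} ->
  exists g : A -> A, (forall x, P x -> Q (g x)) /\
    (forall x x', P x -> P x' -> g x = g x' -> x = x').
Proof.
  intros [a] [f Hf].
  destruct (choice (fun x y => forall H : P x, y = proj1_sig (f (exist _ x H)))) as [g Hg].
  { intro x. destruct (classic (P x)) as [H|H].
    - exists (proj1_sig (f (exist _ x H))). intro H'. rewrite (proof_irrelevance _ H' H). reflexivity.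
    - exists a. intro H'. contradiction. }
  exists g. split.
  - intros x H. rewrite (Hg x H). apply proj2_sig.
  - intros x x' H H' E. rewrite (Hg x H), (Hg x' H') in E.
    exact (f_equal (@proj1_sig _ _) (Hf _ _ (proj1_sig_inj _ _ E))).
Qed.

Section ClassicalOrders.
Import eqtype boolp.

Lemma zorn_preorder {T : Type} (t0 : T) (R : T -> T -> Prop) :
  (forall t, R t t) -> (forall r s t, R r s -> R s t -> R r t) ->
  (forall A : T -> Prop, (forall s t, A s -> A t -> R s t \/ R t s) ->
     exists t, forall s, A s -> R s t) ->
  exists t, forall s, R t s -> R s t.
Proof.
  intros Hrefl Htrans Hchain.
  destruct (classical_sets.ZL_preorder t0 (R := fun x y => asbool (R x y))) as [m Hm].
  - intro t. apply asboolT, Hrefl.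
  - intros r s t H1 H2. apply asboolT.
    apply (Htrans r s t); apply asboolW; assumption.
  - intros A HA. destruct (Hchain A) as [t Ht].
    + intros s t Hs Ht. destruct (HA s t Hs Ht); [left|right]; apply asboolW; assumption.
    + exists t. intros s Hs. apply asboolT, Ht, Hs.
  - exists m. intros s Hs. apply asboolW, Hm, asboolT, Hs.
Qed.

Lemma well_order_exists (T : Type) : exists lt : T -> T -> Prop,
  (forall P : T -> Prop, (exists x, P x) -> exists m, P m /\ forall y, P y -> ~ lt y m) /\
  (forall x y, lt x y \/ x = y \/ lt y x).
Proof.
  destruct (wochoice.well_ordering_principle {classic T}) as [R HR].
  assert (Hwo : wochoice.wo_chain R (fun _ => true)) by (apply wochoice.withinW; exact HR).
  exists (fun x y => R x y = true /\ x <> y). split.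
  - intros P [x Px]. destruct (HR (fun y => asbool (P y))) as [m [[Hm1 Hm2] _]].
    { exists x. apply asboolT, Px. }
    exists m. split; [exact (asboolW Hm1)|].
    intros y Py [Hym Hne]. apply Hne.
    apply (wochoice.wo_chain_antisymmetric Hwo (x:=y) (y:=m)); try reflexivity.
    apply andb_true_intro. split; [exact Hym|]. apply Hm2, asboolT, Py.
  - intros x y. destruct (Classical_Prop.classic (x = y)) as [E|E]; [auto|].
    destruct (orb_prop _ _ (wochoice.wo_chainW Hwo (x:=x) (y:=y) Logic.eq_refl Logic.eq_refl)); auto.
Qed.

End ClassicalOrders.

Section PartialMaps.
Variables I V : Type.

Record pmap := PMap { pdom : I -> Prop; pval : I -> V }.

Definition extends (p q : pmap) : Prop :=
  forall i, pdom p i -> pdom q i /\ pval q i = pval p i.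

Definition pchain (C : pmap -> Prop) : Prop :=
  forall p q, C p -> C q -> extends p q \/ extends q p.

Definition union_of (C : pmap -> Prop) (u : pmap) : Prop :=
  (forall i, pdom u i -> exists p, C p /\ pdom p i) /\ (forall p, C p -> extends p u).

Lemma union_of_exists {C : pmap -> Prop} (p0 : pmap) :
  C p0 -> pchain C -> exists u, union_of C u.
Proof.
  intros Hp0 HC.
  destruct (choice (fun i v => forall p, C p -> pdom p i -> v = pval p i)) as [val Hval].
  { intro i. destruct (classic (exists p, C p /\ pdom p i)) as [[p [Hp Hi]]|Hn].
    - exists (pval p i). intros q Hq Hqi.
      destruct (HC p q Hp Hq) as [E|E]; [symmetry|]; apply E; assumption.
    - exists (pval p0 i). intros p Hp Hi. exfalso. eauto. }
  exists (PMap (fun i => exists p, C p /\ pdom p i) val). split; [auto|].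
  intros p Hp i Hi. split; [exists p; auto|]. apply Hval; assumption.
Qed.

Lemma union_of_list {C : pmap -> Prop} {u : pmap} :
  pchain C -> (exists p, C p) -> union_of C u ->
  forall l, (forall i, In i l -> pdom u i) ->
    exists p, C p /\ forall i, In i l -> pdom p i.
Proof.
  intros HC [p0 Hp0] [Hdom _] l. induction l as [|i l IH]; intro Hl.
  - exists p0. split; [exact Hp0|]. intros i [].
  - destruct IH as [p [Hp Hpl]]; [intros j Hj; apply Hl; right; exact Hj|].
    destruct (Hdom i (Hl i (or_introl eq_refl))) as [q [Hq Hqi]].
    destruct (HC p q Hp Hq) as [E|E].
    + exists q. split; [exact Hq|]. intros j [<-|Hj]; [exact Hqi|apply E, Hpl, Hj].
    + exists p. split; [exact Hp|]. intros j [<-|Hj]; [apply E, Hqi|apply Hpl, Hj].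
Qed.

Lemma pmap_zorn (P : pmap -> Prop) (p0 : pmap) : P p0 ->
  (forall C u, pchain C -> (exists p, C p) -> (forall p, C p -> P p) ->
     union_of C u -> P u) ->
  exists m, P m /\ forall q, P q -> extends m q -> forall i, pdom q i -> pdom m i.
Proof.
  intros H0 Hunion.
  destruct (zorn_preorder (exist P p0 H0)
              (fun p q => extends (proj1_sig p) (proj1_sig q))) as [[m Hm] Hmax].
  - intros p i Hi. auto.
  - intros r s t H1 H2 i Hi.
    destruct (H1 i Hi) as [Hs E1]. destruct (H2 i Hs) as [Ht E2]. split; congruence.
  - intros A HA. set (C := fun p => exists s, A s /\ proj1_sig s = p).
    assert (HC : pchain C).
    { intros p q [s [Hs <-]] [t [Ht <-]]. apply HA; assumption. }
    destruct (classic (exists s, A s)) as [[s Hs]|Hne].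
    + destruct (union_of_exists (proj1_sig s) (ex_intro _ s (conj Hs eq_refl)) HC) as [u Hu].
      assert (Pu : P u).
      { apply (Hunion C); [exact HC|exists (proj1_sig s), s; auto| |exact Hu].
        intros p [t [_ <-]]. apply proj2_sig. }
      exists (exist P u Pu). intros t Ht. apply (proj2 Hu). exists t; auto.
    + exists (exist P p0 H0). intros s Hs. exfalso. eauto.
  - exists m. split; [exact Hm|]. intros q Hq Hext. apply (Hmax (exist P q Hq) Hext).
Qed.

End PartialMaps.

Arguments PMap {I V}.
Arguments pdom {I V}.
Arguments pval {I V}.
Arguments extends {I V}.
Arguments pchain {I V}.
Arguments union_of {I V}.
Arguments union_of_list {I V C u}.
Arguments pmap_zorn {I V}.

Lemma card_le_total (A B : Type) : card_le A B \/ card_le B A.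
Proof.
  destruct (classic (inhabited B)) as [[b0]|HB].
  2:{ right. exists (fun b => False_rect A (HB (inhabits b))).
      intros b. exfalso. exact (HB (inhabits b)). }
  set (P := fun p : pmap A B =>
    forall a a', pdom p a -> pdom p a' -> pval p a = pval p a' -> a = a').
  destruct (pmap_zorn P (PMap (fun _ => False) (fun _ => b0))) as [m [Hm Hmax]].
  - intros a a' [].
  - intros C u HC HCne HP Hu a a' Ha Ha' E.
    destruct (union_of_list HC HCne Hu [a; a']) as [p [Hp Hpl]].
    { intros i [<-|[<-|[]]]; assumption. }
    assert (Hpa := Hpl a (or_introl eq_refl)).
    assert (Hpa' := Hpl a' (or_intror (or_introl eq_refl))).
    apply (HP p Hp a a' Hpa Hpa').
    rewrite <- (proj2 (proj2 Hu p Hp a Hpa)), <- (proj2 (proj2 Hu p Hp a' Hpa')). exact E.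
  - destruct (classic (forall a, pdom m a)) as [Hall|Hnall].
    { left. exists (pval m). intros a a'. apply Hm; apply Hall. }
    destruct (not_all_ex_not _ _ Hnall) as [a0 Ha0].
    destruct (classic (forall b, exists a, pdom m a /\ pval m a = b)) as [Hsurj|Hnsurj].
    { right. destruct (choice _ Hsurj) as [g Hg]. exists g. intros b b' E.
      rewrite <- (proj2 (Hg b)), <- (proj2 (Hg b')), E. reflexivity. }
    destruct (not_all_ex_not _ _ Hnsurj) as [b1 Hb1].
    exfalso. apply Ha0.
    set (val := fun a => if excluded_middle_informative (a = a0) then b1 else pval m a).
    apply (Hmax (PMap (fun a => pdom m a \/ a = a0) val)); [| |right; reflexivity].
    + intros a a' Ha Ha'. unfold val; simpl.
      destruct (excluded_middle_informative (a = a0)) as [->|Ea];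
        destruct (excluded_middle_informative (a' = a0)) as [->|Ea']; intro E.
      * reflexivity.
      * exfalso. apply Hb1. exists a'. destruct Ha' as [Ha'|]; [auto|contradiction].
      * exfalso. apply Hb1. exists a. destruct Ha as [Ha|]; [auto|contradiction].
      * destruct Ha as [Ha|]; [|contradiction]. destruct Ha' as [Ha'|]; [|contradiction].
        apply Hm; assumption.
    + intros a Ha. split; [left; exact Ha|]. simpl. unfold val.
      destruct (excluded_middle_informative (a = a0)) as [->|]; [contradiction|reflexivity].
Qed.

Lemma left_inverse_on {A B : Type} {P : A -> Prop} {f : A -> B} :
  (forall x x', P x -> P x' -> f x = f x' -> x = x') ->
  inhabited A -> exists g : B -> A, forall x, P x -> g (f x) = x.
Proof.
  intros Hinj [a].
  destruct (choice (fun y x => (exists x0, P x0 /\ f x0 = y) -> P x /\ f x = y)) as [g Hg].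
  { intro y. destruct (classic (exists x0, P x0 /\ f x0 = y)) as [[x0 Hx0]|Hy].
    - exists x0. auto.
    - exists a. intro. contradiction. }
  exists g. intros x Hx. destruct (Hg (f x)) as [Hgx E]; [exists x; auto|].
  apply Hinj; assumption.
Qed.

(* The domain of [p] is the square B x B, where B is read off the diagonal. *)
Definition square_embedding {A : Type} (e : nat -> A) (p : pmap (A * A) A) : Prop :=
  (forall n, pdom p (e n, e n)) /\
  (forall x y, pdom p (x, y) <-> pdom p (x, x) /\ pdom p (y, y)) /\
  (forall x y, pdom p (x, x) -> pdom p (y, y) -> pdom p (pval p (x, y), pval p (x, y))) /\
  (forall x y x' y', pdom p (x, x) -> pdom p (y, y) -> pdom p (x', x') -> pdom p (y', y') ->
     pval p (x, y) = pval p (x', y') -> x = x' /\ y = y').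

Lemma square_embedding_base {A : Type} {e : nat -> A} :
  Injective e -> exists p, square_embedding e p.
Proof.
  intro He.
  destruct (left_inverse_on (P := fun _ => True) (fun n n' _ _ => He n n') (inhabits 0))
    as [inv Hinv].
  set (R := fun x => exists n, x = e n).
  exists (PMap (fun q => R (fst q) /\ R (snd q)) (fun q => e (to_nat (inv (fst q), inv (snd q))))).
  split; [|split; [|split]]; cbn [pdom pval fst snd].
  - intro n. split; exists n; reflexivity.
  - intros x y. tauto.
  - intros x y _ _. split; eexists; reflexivity.
  - intros x y x' y' [[a ->] _] [[b ->] _] [[c ->] _] [[d ->] _] E.
    apply He, to_nat_inj in E. rewrite !Hinv in E by exact I.
    injection E as -> ->. split; reflexivity.
Qed.

Lemma square_embedding_union {A : Type} (e : nat -> A) (C : pmap (A * A) A -> Prop)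
  (u : pmap (A * A) A) :
  pchain C -> (exists p, C p) -> (forall p, C p -> square_embedding e p) ->
  union_of C u -> square_embedding e u.
Proof.
  intros HC HCne HP Hu.
  assert (Hval : forall p, C p -> forall q, pdom p q -> pdom u q /\ pval u q = pval p q)
    by exact (proj2 Hu).
  assert (Hcommon : forall l, (forall i, In i l -> pdom u i) ->
            exists p, C p /\ square_embedding e p /\ forall i, In i l -> pdom p i).
  { intros l Hl. destruct (union_of_list HC HCne Hu l Hl) as [p [Hp Hpl]]. exists p. auto. }
  split; [|split; [|split]].
  - intro n. destruct HCne as [p Hp]. apply (Hval p Hp), (proj1 (HP p Hp)).
  - intros x y. split.
    + intro H. destruct (proj1 Hu _ H) as [p [Hp Hxy]].
      apply (proj1 (proj2 (HP p Hp))) in Hxy. destruct Hxy. split; apply (Hval p Hp); assumption.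
    + intros [Hx Hy].
      destruct (Hcommon [(x, x); (y, y)]) as [p [Hp [Hsq Hpl]]]; [simpl; intuition congruence|].
      apply (Hval p Hp), (proj1 (proj2 Hsq)). split; apply Hpl; simpl; auto.
  - intros x y Hx Hy.
    destruct (Hcommon [(x, x); (y, y)]) as [p [Hp [Hsq Hpl]]]; [simpl; intuition congruence|].
    destruct Hsq as (_ & Hsq & Hcl & _).
    assert (Hxy : pdom p (x, y)) by (apply Hsq; split; apply Hpl; simpl; auto).
    rewrite (proj2 (Hval p Hp _ Hxy)). apply (Hval p Hp), Hcl; apply Hpl; simpl; auto.
  - intros x y x' y' Hx Hy Hx' Hy' E.
    destruct (Hcommon [(x, x); (y, y); (x', x'); (y', y')]) as [p [Hp [Hsq Hpl]]];
      [simpl; intuition congruence|].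
    destruct Hsq as (_ & Hsq & _ & Hinj).
    assert (Hxy : pdom p (x, y)) by (apply Hsq; split; apply Hpl; simpl; auto).
    assert (Hxy' : pdom p (x', y')) by (apply Hsq; split; apply Hpl; simpl; auto).
    rewrite (proj2 (Hval p Hp _ Hxy)), (proj2 (Hval p Hp _ Hxy')) in E.
    apply Hinj; try apply Hpl; simpl; auto.
Qed.

Lemma union_embedding {A : Type} (B C : A -> Prop) (f : A * A -> A) (psi : A -> A)
    (a0 a1 : A) :
  B a0 -> B a1 -> a0 <> a1 ->
  (forall x y, B x -> B y -> B (f (x, y))) ->
  (forall x y x' y', B x -> B y -> B x' -> B y' -> f (x, y) = f (x', y') -> x = x' /\ y = y') ->
  (forall x, C x -> B (psi x)) ->
  (forall x x', C x -> C x' -> psi x = psi x' -> x = x') ->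
  exists lam : A -> A, (forall x, B x \/ C x -> B (lam x)) /\
    (forall x x', B x \/ C x -> B x' \/ C x' -> lam x = lam x' -> x = x').
Proof.
  intros Ha0 Ha1 Hne Hcl Hinj Hpsi Hpsi_inj.
  exists (fun x => if excluded_middle_informative (B x) then f (x, a0) else f (psi x, a1)).
  split.
  - intros x Hx. destruct (excluded_middle_informative (B x)) as [Bx|Bx]; apply Hcl; auto.
    destruct Hx; [contradiction|auto].
  - intros x x' Hx Hx'.
    destruct (excluded_middle_informative (B x)) as [Bx|Bx];
      destruct (excluded_middle_informative (B x')) as [Bx'|Bx']; intro E.
    + exact (proj1 (Hinj _ _ _ _ Bx Ha0 Bx' Ha0 E)).
    + destruct Hx' as [|Cx']; [contradiction|].
      exfalso. exact (Hne (proj2 (Hinj _ _ _ _ Bx Ha0 (Hpsi x' Cx') Ha1 E))).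
    + destruct Hx as [|Cx]; [contradiction|].
      exfalso. exact (Hne (proj2 (Hinj _ _ _ _ Bx' Ha0 (Hpsi x Cx) Ha1 (eq_sym E)))).
    + destruct Hx as [|Cx]; [contradiction|]. destruct Hx' as [|Cx']; [contradiction|].
      apply Hpsi_inj; [assumption|assumption|].
      exact (proj1 (Hinj _ _ _ _ (Hpsi x Cx) Ha1 (Hpsi x' Cx') Ha1 E)).
Qed.

Lemma square_embedding_extend {A : Type} {e : nat -> A} {m : pmap (A * A) A} {phi : A -> A} :
  Injective e -> square_embedding e m ->
  (forall x, pdom m (x, x) -> ~ pdom m (phi x, phi x)) ->
  (forall x x', pdom m (x, x) -> pdom m (x', x') -> phi x = phi x' -> x = x') ->
  exists q, square_embedding e q /\ extends m q /\ pdom q (phi (e 0), phi (e 0)).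
Proof.
  intros He Hm Hphi Hphi_inj. pose proof Hm as (He_in & Hsq & Hcl & Hinj).
  set (B := fun x => pdom m (x, x)).
  set (C := fun x => exists z, B z /\ x = phi z).
  destruct (left_inverse_on Hphi_inj (inhabits (e 0))) as [psi Hpsi].
  destruct (union_embedding B C (pval m) psi (e 0) (e 1)) as [lam [Hlam Hlam_inj]];
    try apply He_in; try assumption.
  { intro E. apply He in E. discriminate. }
  { intros x [z [Bz ->]]. rewrite Hpsi; assumption. }
  { intros x x' [z [Bz ->]] [z' [Bz' ->]]. rewrite !Hpsi by assumption. intros ->. reflexivity. }
  set (B' := fun x => B x \/ C x).
  (* Pairs outside B x B go injectively into phi(B), which is disjoint from B. *)
  set (val := fun q : A * A =>
    if excluded_middle_informative (B (fst q) /\ B (snd q)) then pval m q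
    else phi (pval m (lam (fst q), lam (snd q)))).
  assert (Hval_in : forall x y, B' x -> B' y -> B' (val (x, y))).
  { intros x y Hx Hy. unfold val; simpl. destruct excluded_middle_informative as [[Bx By]|_].
    - left. apply Hcl; assumption.
    - right. eexists. split; [|reflexivity]. apply Hcl; apply Hlam; assumption. }
  exists (PMap (fun q => B' (fst q) /\ B' (snd q)) val).
  split; [split; [|split; [|split]]|split]; cbn [pdom pval fst snd].
  - intro n. split; left; apply He_in.
  - intros x y. tauto.
  - intros x y [Hx _] [Hy _]. split; apply Hval_in; assumption.
  - intros x y x' y' [Hx _] [Hy _] [Hx' _] [Hy' _]. unfold val; simpl.
    destruct (excluded_middle_informative (B x /\ B y)) as [[Bx By]|Nxy];
      destruct (excluded_middle_informative (B x' /\ B y')) as [[Bx' By']|Nxy']; intro E.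
    + apply Hinj; assumption.
    + exfalso. apply (Hphi (pval m (lam x', lam y'))); [apply Hcl; apply Hlam; assumption|].
      rewrite <- E. apply Hcl; assumption.
    + exfalso. apply (Hphi (pval m (lam x, lam y))); [apply Hcl; apply Hlam; assumption|].
      rewrite E. apply Hcl; assumption.
    + apply Hphi_inj in E; try (apply Hcl; apply Hlam; assumption).
      apply Hinj in E; try (apply Hlam; assumption).
      destruct E as [E1 E2]. split; apply Hlam_inj; assumption.
  - intros [x y] Hxy. apply Hsq in Hxy. destruct Hxy as [Bx By].
    split; [split; left; assumption|]. unfold val; simpl.
    destruct excluded_middle_informative as [_|N]; [reflexivity|tauto].
  - split; right; exists (e 0); split; [apply He_in|reflexivity|apply He_in|reflexivity].
Qed.

Lemma card_le_prod_self {A : Type} : card_le nat A -> card_le (A * A) A.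
Proof.
  intros [e He].
  destruct (square_embedding_base He) as [p0 Hp0].
  destruct (pmap_zorn (square_embedding e) p0 Hp0 (square_embedding_union e))
    as [m [Hm Hmax]].
  pose proof Hm as (He_in & _ & Hcl & Hinj).
  destruct (card_le_total {x | pdom m (x, x)} {x | ~ pdom m (x, x)}) as [H|H];
    destruct (card_le_subtype (inhabits (e 0)) H) as [g [Hg Hg_inj]].
  - exfalso.
    destruct (square_embedding_extend He Hm Hg Hg_inj) as [q [Hq [Hext Hnew]]].
    exact (Hg (e 0) (He_in 0) (Hmax q Hq Hext _ Hnew)).
  - destruct (union_embedding (fun x => pdom m (x, x)) (fun x => ~ pdom m (x, x))
                (pval m) g (e 0) (e 1)) as [lam [Hlam Hlam_inj]];
      try apply He_in; try assumption.
    { intro E. apply He in E. discriminate. }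
    exists (fun q => pval m (lam (fst q), lam (snd q))).
    intros [x y] [x' y'] E. simpl in E.
    apply Hinj in E; try apply Hlam; try apply classic.
    destruct E as [E1 E2]. apply Hlam_inj in E1; try apply classic.
    apply Hlam_inj in E2; try apply classic. subst. reflexivity.
Qed.

Lemma card_le_list {A : Type} : card_le nat A -> card_le (list A) A.
Proof.
  intro HN. destruct (card_le_prod_self HN) as [pair Hpair]. destruct HN as [e He].
  set (code := fix code (l : list A) : A :=
         match l with [] => e 0 | x :: l' => pair (x, code l') end).
  exists (fun l => pair (e (length l), code l)).
  intros l l' E. apply Hpair in E. injection E as El Ec. apply He in El.
  revert l' El Ec. induction l as [|x l IH]; intros [|x' l'] El Ec; try discriminate.
  - reflexivity.
  - simpl in Ec. apply Hpair in Ec. injection Ec as -> Ec. f_equal. apply IH; auto.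
Qed.

Lemma finite_or_card_le_nat (A : Type) :
  (exists l : list A, forall x, In x l) \/ card_le nat A.
Proof.
  destruct (classic (exists l : list A, forall x, In x l)) as [H|H]; [left; exact H|right].
  assert (Hnew : forall l : list A, exists x, ~ In x l).
  { intro l. apply not_all_ex_not. intro Hl. apply H. exists l. exact Hl. }
  destruct (choice _ Hnew) as [pick Hpick].
  set (build := fix build n := match n with 0 => [] | S n => pick (build n) :: build n end).
  assert (Hb : forall n m, n < m -> In (pick (build n)) (build m)).
  { intros n m Hnm. induction Hnm; simpl; auto. }
  exists (fun n => pick (build n)). intros n m E.
  destruct (PeanoNat.Nat.lt_trichotomy n m) as [Hl|[Hnm|Hl]]; [exfalso|exact Hnm|exfalso].
  - apply (Hpick (build m)). rewrite <- E. apply Hb, Hl.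
  - apply (Hpick (build n)). rewrite E. apply Hb, Hl.
Qed.

Lemma small_union_avoid {A I : Type} (F : I -> list A) :
  (forall l : list A, exists a, ~ In a l) -> ~ card_le A I ->
  exists a, forall i, ~ In a (F i).
Proof.
  intros Hinf Hsmall. apply NNPP. intro Hno.
  assert (Hcov : forall a, exists i, In a (F i)).
  { intro a. apply NNPP. intro Ha. apply Hno. exists a. intros i Hi. apply Ha. exists i. exact Hi. }
  destruct (finite_or_card_le_nat I) as [[l Hl]|[e He]].
  - destruct (Hinf (flat_map F l)) as [a Ha]. apply Ha.
    destruct (Hcov a) as [i Hi]. apply in_flat_map. exists i. auto.
  - apply Hsmall.
    assert (Hpos : forall a, exists p : I * nat, nth_error (F (fst p)) (snd p) = Some a).
    { intro a. destruct (Hcov a) as [i Hi]. destruct (In_nth_error _ _ Hi) as [n Hn].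
      exists (i, n). exact Hn. }
    destruct (choice _ Hpos) as [pos Hpos'].
    apply (card_le_trans (B := (I * I)%type)); [|apply card_le_prod_self; exists e; exact He].
    exists (fun a => (fst (pos a), e (snd (pos a)))).
    intros a a' E. injection E as E1 E2. apply He in E2.
    assert (Ea := Hpos' a). assert (Ea' := Hpos' a'). rewrite E1, E2 in Ea. congruence.
Qed.

Lemma small_segments_well_order (A : Type) : exists lt : A -> A -> Prop,
  (forall P : A -> Prop, (exists x, P x) -> exists m, P m /\ forall y, P y -> ~ lt y m) /\
  (forall x y, lt x y \/ x = y \/ lt y x) /\
  (forall x, ~ card_le A {y | lt y x}).
Proof.
  destruct (well_order_exists A) as [lt0 [Hleast0 Htri0]].
  destruct (classic (exists i, card_le A {y | lt0 y i})) as [Hbig|Hsmall].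
  2:{ exists lt0. split; [exact Hleast0|split; [exact Htri0|]].
      intros x Hx. apply Hsmall. exists x. exact Hx. }
  (* Pull the order back along an embedding of A into the least segment as large as A. *)
  destruct (Hleast0 _ Hbig) as [i0 [[psi Hpsi] Hi0]].
  set (ps := fun x => proj1_sig (psi x)).
  assert (Hps : Injective ps) by (intros x y E; apply Hpsi, proj1_sig_inj, E).
  exists (fun x y => lt0 (ps x) (ps y)). split; [|split].
  - intros P [x Px].
    destruct (Hleast0 (fun z => exists x, P x /\ ps x = z)) as [m [[x0 [Px0 <-]] Hm]].
    { exists (ps x), x. auto. }
    exists x0. split; [exact Px0|]. intros y Py. apply Hm. exists y. auto.
  - intros x y. destruct (Htri0 (ps x) (ps y)) as [H|[H|H]]; auto.
  - intros x [chi Hchi]. apply (Hi0 (ps x)); [|exact (proj2_sig (psi x))].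
    exists (fun y => exist (fun z => lt0 z (ps x)) (ps (proj1_sig (chi y))) (proj2_sig (chi y))).
    intros a b E. apply Hchi, proj1_sig_inj, Hps. exact (f_equal (@proj1_sig _ _) E).
Qed.

Section GroupFacts.
Context {G : group}.

Lemma gmul_cancel_r (a x y : G) : gmul x a = gmul y a -> x = y.
Proof.
  intro E. rewrite <- (gmul1r _ x), <- (gmul1r _ y), <- (gmulVr _ a), !gmulA, E. reflexivity.
Qed.

Lemma gmul_solve_l (a x y : G) : gmul a x = y -> x = gmul (ginv a) y.
Proof. intros <-. rewrite gmulA, gmulVl, gmul1l. reflexivity. Qed.

Lemma separated_sub (D : list G) (S S' : G -> Prop) :
  (forall g, S' g -> S g) -> separated D S -> separated D S'.
Proof. intros HS' HS g h Hg Hh. apply HS; auto. Qed.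

Definition far (D T : list G) (g : G) (T' : list G) (g' : G) : Prop :=
  forall t t' d d', In t T -> In t' T' -> In d D -> In d' D ->
    gmul d (gmul t g) <> gmul d' (gmul t' g').

Lemma far_sym (D T T' : list G) (g g' : G) : far D T g T' g' -> far D T' g' T g.
Proof. intros H t t' d d' Ht Ht' Hd Hd' E. exact (H t' t d' d Ht' Ht Hd' Hd (eq_sym E)). Qed.

Lemma far_cofinite (D T T' : list G) (g' : G) :
  exists L : list G, forall g, ~ In g L -> far D T g T' g'.
Proof.
  exists (flat_map (fun t => flat_map (fun t' => flat_map (fun d => map (fun d' =>
    gmul (ginv t) (gmul (ginv d) (gmul d' (gmul t' g')))) D) D) T') T).
  intros g Hg t t' d d' Ht Ht' Hd Hd' E. apply Hg.
  apply in_flat_map. exists t. split; [exact Ht|].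
  apply in_flat_map. exists t'. split; [exact Ht'|].
  apply in_flat_map. exists d. split; [exact Hd|].
  apply in_map_iff. exists d'. split; [|exact Hd'].
  symmetry. apply gmul_solve_l, gmul_solve_l, E.
Qed.

Lemma separated_pattern (F : list G) (S : G -> Prop) (v : G -> bool) :
  separated F S -> exists z : G -> bool, forall s f, S s -> In f F -> z (gmul f s) = v f.
Proof.
  intro HS.
  destruct (choice (fun k b => forall s f, S s -> In f F -> k = gmul f s -> b = v f)) as [z Hz].
  { intro k. destruct (classic (exists s f, S s /\ In f F /\ k = gmul f s))
      as [[s0 [f0 [Hs0 [Hf0 ->]]]]|Hn].
    - exists (v f0). intros s f Hs Hf E. destruct (classic (s0 = s)) as [<-|Hne].
      + apply gmul_cancel_r in E. congruence.
      + exfalso. exact (HS s0 s Hs0 Hs Hne f0 f Hf0 Hf E).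
    - exists false. intros s f Hs Hf E. exfalso. apply Hn. exists s, f. auto. }
  exists z. intros s f Hs Hf. exact (Hz _ s f Hs Hf eq_refl).
Qed.

Definition isolated_one (D : list G) (w : G -> bool) (g : G) : Prop :=
  w g = true /\ forall d d', In d D -> In d' D -> gmul (ginv d') (gmul d g) <> g ->
    w (gmul (ginv d') (gmul d g)) = false.

Lemma isolated_ones_separated (D : list G) (w : G -> bool) : separated D (isolated_one D w).
Proof.
  intros g h [_ Hg] [Hh _] Hne d d' Hd Hd' E.
  symmetry in E. apply gmul_solve_l in E. subst h.
  rewrite (Hg d d' Hd Hd') in Hh; [discriminate|].
  intro E. apply Hne. symmetry. exact E.
Qed.

Lemma isolated_one_bern_act {D : list G} {w : G -> bool} {a g : G} :
  isolated_one D (bern_act a w) g -> isolated_one D w (gmul g a).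
Proof.
  intros [Hg Hiso]. split; [exact Hg|]. intros d d' Hd Hd' Hne.
  assert (E : gmul (ginv d') (gmul d (gmul g a)) = gmul (gmul (ginv d') (gmul d g)) a)
    by (rewrite !gmulA; reflexivity).
  rewrite E. apply (Hiso d d' Hd Hd'). intro E'. apply Hne. rewrite E, E'. reflexivity.
Qed.

Lemma isolated_one_local {D : list G} {w : G -> bool} {g : G} :
  isolated_one D w g -> exists F : list G,
    forall w', (forall h, In h F -> w' h = w h) -> isolated_one D w' g.
Proof.
  intros [Hg Hiso].
  exists (g :: flat_map (fun d => map (fun d' => gmul (ginv d') (gmul d g)) D) D).
  intros w' Hw'. split.
  - rewrite Hw'; [exact Hg|left; reflexivity].
  - intros d d' Hd Hd' Hne. rewrite Hw'; [apply Hiso; assumption|].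
    right. apply in_flat_map. exists d. split; [exact Hd|].
    apply in_map_iff. exists d'. auto.
Qed.

End GroupFacts.

Section UniversalSeparatedSet.
Variables (G : group) (D : list G) (lt : list G -> list G -> Prop).
Hypothesis G_infinite : infinite_group G.
Hypothesis lt_least : forall P : list G -> Prop, (exists T, P T) ->
  exists M, P M /\ forall T, P T -> ~ lt T M.
Hypothesis lt_trichotomy : forall T T', lt T T' \/ T = T' \/ lt T' T.
Hypothesis lt_small : forall T, ~ card_le G {T' | lt T' T}.

Lemma lt_irrefl (T : list G) : ~ lt T T.
Proof.
  destruct (lt_least (fun T' => T' = T)) as [M [-> HM]]; [exists T; reflexivity|].
  apply HM. reflexivity.
Qed.

Definition far_family (p : pmap (list G) G) : Prop :=
  (forall T T', lt T' T -> pdom p T -> pdom p T') /\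
  (forall T T', pdom p T -> pdom p T' -> T <> T' -> far D T (pval p T) T' (pval p T')).

Lemma far_family_union (C : pmap (list G) G -> Prop) (u : pmap (list G) G) :
  pchain C -> (exists p, C p) -> (forall p, C p -> far_family p) ->
  union_of C u -> far_family u.
Proof.
  intros HC HCne HP Hu. split.
  - intros T T' Hlt HT. destruct (proj1 Hu T HT) as [p [Hp HpT]].
    apply (proj2 Hu p Hp), (proj1 (HP p Hp) T T' Hlt HpT).
  - intros T T' HT HT' Hne.
    destruct (union_of_list HC HCne Hu [T; T']) as [p [Hp Hpl]].
    { intros i [<-|[<-|[]]]; assumption. }
    assert (HpT := Hpl T (or_introl eq_refl)).
    assert (HpT' := Hpl T' (or_intror (or_introl eq_refl))).
    rewrite (proj2 (proj2 Hu p Hp T HpT)), (proj2 (proj2 Hu p Hp T' HpT')).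
    apply (HP p Hp); assumption.
Qed.

Lemma far_family_extend (m : pmap (list G) G) (T : list G) :
  far_family m -> (forall T', pdom m T' <-> lt T' T) ->
  exists q, far_family q /\ extends m q /\ pdom q T.
Proof.
  intros [Hdown Hfar] Hseg.
  destruct (choice (fun (T' : {T' | lt T' T}) L =>
              forall g, ~ In g L -> far D T g (proj1_sig T') (pval m (proj1_sig T'))))
    as [F HF].
  { intro T'. apply far_cofinite. }
  destruct (small_union_avoid F G_infinite (lt_small T)) as [g Hg].
  assert (Hg_far : forall T', pdom m T' -> far D T g T' (pval m T')).
  { intros T' HT'. exact (HF (exist _ T' (proj1 (Hseg T') HT')) g (Hg _)). }
  set (val := fun T' => if excluded_middle_informative (T' = T) then g else pval m T').
  exists (PMap (fun T' => pdom m T' \/ T' = T) val).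
  split; [split|split]; cbn [pdom pval].
  - intros T1 T2 Hlt [H1| ->]; left; [exact (Hdown T1 T2 Hlt H1)|apply Hseg, Hlt].
  - intros T1 T2 H1 H2 Hne. unfold val.
    destruct (excluded_middle_informative (T1 = T)) as [->|E1];
      destruct (excluded_middle_informative (T2 = T)) as [->|E2].
    + contradiction.
    + destruct H2 as [H2|]; [|contradiction]. apply Hg_far, H2.
    + destruct H1 as [H1|]; [|contradiction]. apply far_sym, Hg_far, H1.
    + destruct H1 as [H1|]; [|contradiction]. destruct H2 as [H2|]; [|contradiction].
      apply Hfar; assumption.
  - intros T' HT'. split; [left; exact HT'|]. simpl. unfold val.
    destruct (excluded_middle_informative (T' = T)) as [->|]; [|reflexivity].
    exfalso. exact (lt_irrefl T (proj1 (Hseg T) HT')).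
  - right. reflexivity.
Qed.

Lemma far_family_total : exists m, far_family m /\ forall T, pdom m T.
Proof.
  destruct (pmap_zorn far_family (PMap (fun _ => False) (fun _ => gone)))
    as [m [Hm Hmax]].
  - split; intros T T'; cbn; tauto.
  - exact far_family_union.
  - exists m. split; [exact Hm|]. apply NNPP. intro Hall.
    destruct (lt_least (fun T => ~ pdom m T)) as [T [HT HTmin]].
    { apply not_all_ex_not. exact Hall. }
    assert (Hseg : forall T', pdom m T' <-> lt T' T).
    { intro T'. split.
      - intro H. destruct (lt_trichotomy T' T) as [Hlt|[ ->|Hlt]]; [exact Hlt|contradiction|].
        exfalso. exact (HT (proj1 Hm T' T Hlt H)).
      - intro Hlt. apply NNPP. intro H. exact (HTmin T' H Hlt). }
    destruct (far_family_extend m T Hm Hseg) as [q [Hq [Hext HqT]]].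
    exact (HT (Hmax q Hq Hext T HqT)).
Qed.

End UniversalSeparatedSet.

Lemma universal_separated_set (G : group) (D : list G) : infinite_group G ->
  exists S, separated D S /\
    forall T, separated D (fun t => In t T) -> exists g, forall t, In t T -> S (gmul t g).
Proof.
  intro Hinf.
  assert (HN : card_le nat G).
  { destruct (finite_or_card_le_nat G) as [[l Hl]|HN]; [|exact HN].
    destruct (Hinf l) as [g Hg]. contradiction (Hg (Hl g)). }
  destruct (small_segments_well_order (list G)) as [lt [Hleast [Htri Hsmall]]].
  destruct (far_family_total G D lt Hinf Hleast Htri) as [m [[_ Hfar] Hall]].
  { intros T HT. exact (Hsmall T (card_le_trans (card_le_list HN) HT)). }
  exists (fun s => exists T t, separated D (fun t => In t T) /\ In t T /\ s = gmul t (pval m T)).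
  split.
  - intros s s' [T [t [HT [Ht ->]]]] [T' [t' [HT' [Ht' ->]]]] Hne d d' Hd Hd' E.
    destruct (classic (T = T')) as [<-|HTT].
    + assert (Htt : t <> t') by (intros ->; contradiction).
      apply (HT t t' Ht Ht' Htt d d' Hd Hd'), (gmul_cancel_r (pval m T)).
      rewrite <- !gmulA. exact E.
    + exact (Hfar T T' (Hall T) (Hall T') HTT t t' d d' Ht Ht' Hd Hd' E).
  - intros T HT. exists (pval m T). intros t Ht. exists T, t. auto.
Qed.

Section Flows.
Variables (G : group) (X : Type) (op : topology X) (act : G -> X -> X).
Hypothesis flow : is_flow op act.

Lemma act_mul (g h : G) (x : X) : act (gmul g h) x = act g (act h x).
Proof. apply (proj2 (proj1 (proj2 (proj2 (proj2 flow))))). Qed.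

Lemma act_one (x : X) : act gone x = x.
Proof. apply (proj1 (proj1 (proj2 (proj2 (proj2 flow))))). Qed.

Lemma act_preimage_open (g : G) (U : X -> Prop) : op U -> op (fun x => U (act g x)).
Proof. apply (proj2 (proj2 (proj2 (proj2 flow)))). Qed.

Lemma dense_separated_SCP :
  (forall D : list G, exists S, separated D S /\ forall x, dense op (orbit_of act S x)) ->
  SCP op act.
Proof.
  intros H D U HU HUne. destruct (H D) as [S [HS Hdense]]. exists S. split; [exact HS|].
  intro x. destruct (Hdense x U HU HUne) as [y [Uy [s [Hs ->]]]]. exists s. auto.
Qed.

Lemma SCP_finite : SCP op act ->
  forall (D : list G) (U : X -> Prop), op U -> (exists x, U x) ->
    exists T : list G, separated D (fun t => In t T) /\
      forall x, exists t, In t T /\ U (act t x).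
Proof.
  intros HSCP D U HU HUne. destruct (HSCP D U HU HUne) as [S [HS Hcov]].
  set (F := fun W => exists s, S s /\ W = fun x => U (act s x)).
  destruct (proj1 (proj2 flow) F) as [l [Hl Hlcov]].
  { intros W [s [_ ->]]. apply act_preimage_open, HU. }
  { intro x. destruct (Hcov x) as [s [Hs Hx]]. exists (fun y => U (act s y)). split; auto.
    exists s. auto. }
  destruct (choice (fun W s => F W -> S s /\ W = fun x => U (act s x))) as [sel Hsel].
  { intro W. destruct (classic (F W)) as [[s Hs]|HW]; [exists s; auto|].
    exists gone. intro. contradiction. }
  exists (map sel l). split.
  - apply (separated_sub D S); [|exact HS].
    intros t Ht. apply in_map_iff in Ht. destruct Ht as [W [<- HW]]. apply Hsel, Hl, HW.
  - intro x. destruct (Hlcov x) as [W [HW Wx]]. exists (sel W). split; [apply in_map, HW|].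
    destruct (Hsel W (Hl W HW)) as [_ E]. rewrite E in Wx. exact Wx.
Qed.

Lemma SCP_dense_separated : infinite_group G -> SCP op act ->
  forall D : list G, exists S, separated D S /\ forall x, dense op (orbit_of act S x).
Proof.
  intros Hinf HSCP D. destruct (universal_separated_set G D Hinf) as [S [HS Huniv]].
  exists S. split; [exact HS|].
  intros x U HU HUne. destruct (SCP_finite HSCP D U HU HUne) as [T [HT Hcov]].
  destruct (Huniv T HT) as [g Hg]. destruct (Hcov (act g x)) as [t [Ht Hut]].
  exists (act (gmul t g) x). rewrite act_mul. split; [exact Hut|].
  exists (gmul t g). split; [apply Hg, Ht|symmetry; apply act_mul].
Qed.

Lemma SCP_disjoint_bernoulli : SCP op act -> disjoint_flows op act (bern_top G) (@bern_act G).
Proof.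
  intros HSCP C HC Hinv HX HY p. apply NNPP. intro Hp.
  destruct (HC p Hp) as [U [V [HU [HV [Ux [Vz Hbox]]]]]].
  destruct (HV (snd p) Vz) as [F HF].
  destruct (HSCP F U HU (ex_intro _ (fst p) Ux)) as [S [HS Hcov]].
  destruct (separated_pattern F S (snd p) HS) as [z Hz].
  destruct (HY z) as [x Hx]. destruct (Hcov x) as [s [Hs Hus]].
  apply (Hbox (act s x, bern_act s z)); [exact Hus| |exact (Hinv s (x, z) Hx)].
  apply HF. intros h Hh. apply Hz; assumption.
Qed.

Definition avoids (D : list G) (U : X -> Prop) (q : X * (G -> bool)) : Prop :=
  forall g, isolated_one D (snd q) g -> ~ U (act g (fst q)).

Lemma avoids_closed (D : list G) (U : X -> Prop) :
  op U -> closed (prod_top op (bern_top G)) (avoids D U).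
Proof.
  intros HU q Hq. unfold avoids in Hq.
  destruct (not_all_ex_not _ _ Hq) as [g Hg].
  destruct (imply_to_and _ _ Hg) as [Hiso HUg]. apply NNPP in HUg.
  destruct (isolated_one_local Hiso) as [F HF].
  exists (fun y => U (act g y)), (fun w => forall h, In h F -> w h = snd q h).
  split; [apply act_preimage_open, HU|]. split.
  { intros w Hw. exists F. intros w' Hw' h Hh. rewrite Hw' by exact Hh. apply Hw, Hh. }
  split; [exact HUg|]. split; [reflexivity|].
  intros q' HUq' Hq' Havoid. exact (Havoid g (HF _ Hq') HUq').
Qed.

Lemma disjoint_bernoulli_SCP : disjoint_flows op act (bern_top G) (@bern_act G) -> SCP op act.
Proof.
  intro Hdis. apply NNPP. intro Hn.
  destruct (not_all_ex_not _ _ Hn) as [D HD]. destruct (not_all_ex_not _ _ HD) as [U HDU].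
  destruct (imply_to_and _ _ HDU) as [HU HDU']. destruct (imply_to_and _ _ HDU') as [[u Hu] Hno].
  assert (Hall : forall q, avoids D U q).
  { apply Hdis.
    - apply avoids_closed, HU.
    - intros a q Hq g Hg HUg. apply (Hq (gmul g a)); [exact (isolated_one_bern_act Hg)|].
      rewrite act_mul. exact HUg.
    - intro x. exists (fun _ => false). intros g [Hg _]. discriminate.
    - intro w. apply NNPP. intro Hw. apply Hno. exists (isolated_one D w).
      split; [apply isolated_ones_separated|].
      intro x. apply NNPP. intro Hx. apply Hw. exists x. intros g Hg HUg.
      apply Hx. exists g. auto. }
  set (delta := fun k : G => if excluded_middle_informative (k = gone) then true else false).
  apply (Hall (u, delta) gone); [split|].
  - simpl. unfold delta. destruct excluded_middle_informative as [_|N]; [reflexivity|now elim N].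
  - intros d d' _ _ Hne. simpl. unfold delta.
    destruct excluded_middle_informative as [E|_]; [contradiction|reflexivity].
  - simpl. rewrite act_one. exact Hu.
Qed.

End Flows.

Theorem proposition2p5 (G : group) (X : Type) (op : topology X)
  (act : G -> X -> X) :
  infinite_group G -> is_flow op act -> minimal op act ->
  ((forall D : list G, exists S : G -> Prop, separated D S /\
      (forall x, dense op (orbit_of act S x)))
   <-> SCP op act) /\
  (SCP op act <-> disjoint_flows op act (bern_top G) (@bern_act G)).
Proof.
  intros Hinf Hflow _. split; split.
  - apply dense_separated_SCP.
  - apply SCP_dense_separated; assumption.
  - apply SCP_disjoint_bernoulli.
  - apply disjoint_bernoulli_SCP; assumption.
Qed.
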